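(* Let $G$ be a finite group, $N\trianglelefteq G$, and $\theta\in\mathrm{Irr}(N)$ nonlinear. Suppose $\theta$ extends to $\chi\in\mathrm{Irr}(G)$ (i.e. $\chi_N=\theta$). If $\chi$ is an m.i character of $G$, then $\theta$ is an m.i character of $N$.
   Context: A nonlinear $\chi\in\mathrm{Irr}(G)$ is an m.i character of $G$ if there exist a proper subgroup $U<G$, $\lambda\in\mathrm{Irr}(U)$ and an integer $m\ge1$ with $\lambda^G=m\chi$. *)

From HB Require Import structures.
From mathcomp Require Import all_boot all_order all_algebra all_fingroup all_solvable all_field all_character.
Set Implicit Arguments. Unset Strict Implicit. Unset Printing Implicit Defensive.
Import GRing.Theory Num.Theory.
Local Open Scope ring_scope.

Definition mi_char (gT : finGroupType) (G : {group gT}) (chi : 'CF(G)) : Prop :=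
  [/\ chi \in irr G, ~~ (chi \is a linear_char) &
      exists (U : {group gT}) (lambda : 'CF(U)) (m : nat),
        [/\ U \proper G, lambda \in irr U, (0 < m)%N & 'Ind[G] lambda = chi *+ m]].

From HB Require Import structures.
From mathcomp Require Import all_boot all_order all_algebra all_fingroup all_solvable all_field all_character.
Import GRing.Theory Num.Theory.
Local Open Scope ring_scope.

(* Let chi in Irr(G) extend theta in Irr(N), N normal in G, and let
   lambda^G = m chi with lambda in Irr(U), U < G.
   - If N <= U, then chi_U is irreducible (its restriction to N already is),
     so Frobenius reciprocity forces lambda = chi_U and m = 1; comparing
     degrees in lambda^G = chi gives |G : U| = 1, contradicting U < G.
   - Otherwise V = U :&: N is a proper subgroup of N.  Pick a constituent mu
     of lambda_V.  By the Mackey formula for the single double coset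
     U N = N U, namely (psi^(NU))_U = (psi_V)^U for psi in Irr(N), every
     constituent psi of mu^N lies under lambda^G, i.e. is a constituent of
     (lambda^G)_N = m theta.  Hence mu^N = d theta with d > 0, and theta is
     an m.i. character of N. *)

Lemma sum_mulg (gT : finGroupType) (A B : {group gT}) (F : gT -> algC) :
  \sum_(a in A) \sum_(b in B) F (a * b)%g =
  #|A :&: B|%:R * \sum_(y in (A * B)%g) F y.
Proof.
have inner a : a \in A -> \sum_(b in B) F (a * b)%g =
    \sum_(y in (A * B)%g) (if (a^-1 * y)%g \in B then F y else 0).
  move=> Aa; rewrite -big_mkcondr (reindex_inj (mulgI a^-1)%g) /=.
  apply: eq_big => [y|y _]; last by rewrite mulKVg.
  apply/idP/idP => [By|/andP[] //].
  by rewrite By andbT -[y](mulKVg a) mem_mulg.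
rewrite (eq_bigr _ inner) exchange_big /= mulr_sumr; apply: eq_bigr => y ABy.
rewrite -big_mkcondr /= sumr_const mulr_natl; congr (_ *+ _).
(* The fibre over y = a0 * b0 is in bijection with the coset a0 (A :&: B). *)
case/mulsgP: ABy => a0 b0 Aa0 Bb0 ->.
rewrite -(card_lcoset _ a0); apply: eq_card => a.
rewrite mem_lcoset inE [_ \in _]/=; apply/andP/andP => [[Aa Ba] | [Aa Ba]].
  split; first by rewrite groupM ?groupV.
  have: (a^-1 * a0)%g \in B by rewrite -(groupMr _ Bb0) -mulgA.
  by rewrite -groupV invMg invgK.
have Aa' : a \in A by rewrite -[a](mulKVg a0) groupM.
by split=> //; rewrite mulgA groupMr // -groupV invMg invgK.
Qed.

Lemma cfResInd_join (gT : finGroupType) (N U : {group gT}) (psi : 'CF(N)) :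
  (U \subset 'N(N))%g ->
  'Res[U] ('Ind[N <*> U] psi) = 'Ind[U] ('Res[U :&: N] psi).
Proof.
move=> nNU; have nN_NU : (N <*> U \subset 'N(N))%g by rewrite join_subG normG.
have NU_eq : (N <*> U)%g = (U * N)%g by rewrite norm_joinEr // (normC nNU).
apply/cfun_inP => x Ux.
rewrite cfResE ?joing_subr // cfIndE ?joing_subl // cfIndE ?subsetIl //.
have [Nx | notNx] := boolP (x \in N); last first.
  rewrite !big1 ?mulr0 // => y Yy; rewrite cfun0gen // genGid.
    by rewrite inE negb_and (memJ_norm x (subsetP nNU y Yy)) notNx orbT.
  by rewrite memJ_norm ?(subsetP nN_NU).
have ResE u : u \in U -> 'Res[U :&: N] psi (x ^ u)%g = psi (x ^ u)%g.
  by move=> Uu; rewrite cfResE ?subsetIr // inE groupJ ?memJ_norm ?(subsetP nNU).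
(* psi is a class function of N, so x ^ (u * n) contributes psi (x ^ u). *)
have sum_cosets : \sum_(u in U) \sum_(n in N) psi (x ^ (u * n))%g =
                  #|N|%:R * \sum_(u in U) psi (x ^ u)%g.
  rewrite mulr_sumr; apply: eq_bigr => u Uu.
  rewrite (eq_bigr (fun _ => psi (x ^ u)%g)) ?sumr_const ?mulr_natl // => n Nn.
  by rewrite conjgM (cfunJ _ _ Nn).
rewrite (eq_bigr _ ResE).
have := @sum_mulg _ U N (fun y => psi (x ^ y)%g).
rewrite sum_cosets -NU_eq => /esym/(canRL (mulKf (neq0CG (U :&: N)%G))) ->.
by rewrite mulrCA mulKf ?neq0CG.
Qed.

Lemma constt_Res_lift {gT : finGroupType} {G H : {group gT}} {psi : 'CF(G)}
    {i : Iirr H} :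
  i \in irr_constt ('Res[H] psi) ->
  exists2 j, j \in irr_constt psi & i \in irr_constt ('Res[H] 'chi_j).
Proof.
rewrite {1}[psi]cfun_sum_constt linear_sum irr_consttE cfdot_suml => nz_sum.
have /exists_inP[j psi_j nz_j] : [exists j in irr_constt psi,
    '['Res[H] ('[psi, 'chi_j] *: 'chi_j), 'chi_i] != 0].
  apply: contraR nz_sum => /exists_inPn zero_terms.
  by rewrite big1 // => j /zero_terms /negbNE /eqP.
by exists j => //; move: nz_j; rewrite linearZ cfdotZl mulf_eq0 negb_or => /andP[].
Qed.

Lemma cfun_single_constt {gT : finGroupType} {G : {group gT}} {phi : 'CF(G)}
    {t : Iirr G} :
  {in irr_constt phi, forall k, k = t} -> phi = '[phi, 'chi_t] *: 'chi_t.
Proof.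
move=> only_t; rewrite {1}[phi]cfun_sum_cfdot (bigD1 t) //= big1 ?addr0 //.
move=> k /negbTE ntk; apply/eqP; rewrite scaler_eq0; apply/orP; left.
by apply: contraFT ntk => /only_t ->; rewrite eqxx.
Qed.

(* The path goes
   through ('chi_k)^(NU), whose restriction to U contains 'chi_i by Mackey. *)
Lemma constt_Res_Ind_meet {gT : finGroupType} {G N U : {group gT}}
    {i : Iirr U} {j : Iirr (U :&: N)} {k : Iirr N} :
  (U \subset 'N(N))%g -> (N <*> U \subset G)%g ->
  j \in irr_constt ('Res[U :&: N] 'chi_i) ->
  k \in irr_constt ('Ind[N] 'chi_j) ->
  k \in irr_constt ('Res[N] ('Ind[G] 'chi_i)).
Proof.
move=> nNU sHG ij; rewrite constt_Ind_Res => jk.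
have sNH := joing_subl N U; have sUH := joing_subr N U.
(* Both restrictions to U :&: N contain 'chi_j, so they are not orthogonal. *)
have Res_dot : '['Res[U :&: N] 'chi_k, 'Res[U :&: N] 'chi_i] != 0.
  have Res_char (H : {group gT}) (l : Iirr H) := cfRes_char (U :&: N) (irr_char l).
  by apply/eqP => /(constt_ortho_char (Res_char _ k) (Res_char _ i) jk ij)/eqP;
     rewrite cfnorm_irr oner_eq0.
have i_under_k : i \in irr_constt ('Res[U] ('Ind[N <*> U] 'chi_k)).
  by rewrite cfResInd_join // irr_consttE -Frobenius_reciprocity.
have [f kf i_f] := constt_Res_lift i_under_k.
have [c f_c] := constt_cfInd_irr f sHG.
rewrite constt_Ind_Res in f_c; rewrite constt_Ind_Res in kf.
have k_c : k \in irr_constt ('Res[N] 'chi_c).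
  by rewrite -(cfResRes _ sNH sHG) (constt_Res_trans _ f_c) ?cfRes_char ?irr_char.
have i_c : i \in irr_constt ('Res[U] 'chi_c).
  by rewrite -(cfResRes _ sUH sHG) (constt_Res_trans _ f_c) ?cfRes_char ?irr_char.
rewrite -constt_Ind_Res in i_c.
by rewrite (constt_Res_trans _ i_c) ?cfInd_char ?irr_char.
Qed.

Lemma Ind_mult_over_irr_Res {gT : finGroupType} {G N U : {group gT}}
    {chi : 'CF(G)} {lambda : 'CF(U)} {m : nat} :
  N \subset U -> U \subset G -> chi \in irr G -> 'Res[N] chi \in irr N ->
  lambda \in irr U -> (0 < m)%N -> 'Ind[G] lambda = chi *+ m ->
  G \subset U.
Proof.
move=> sNU sUG /irrP[c ->] chiN_irr /irrP[i ->] m_gt0 IndE.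
have chiU_irr : 'Res[U] 'chi_c \in irr U.
  by apply: (cfRes_irr_irr (H := N)); rewrite ?cfRes_char ?irr_char ?cfResRes.
have [j chiUE] := irrP chiU_irr.
have dot_m : '['chi_i, 'Res[U] 'chi_c] = m%:R.
  by rewrite Frobenius_reciprocity IndE cfdotMnl cfnorm_irr.
move: dot_m; rewrite chiUE cfdot_irr.
have [eq_ij | _] := eqVneq i j; last first.
  by move/eqP; rewrite eqr_nat => /eqP m0; rewrite -m0 in m_gt0.
move/esym/eqP; rewrite pnatr_eq1 => /eqP m1.
(* Now lambda^G = chi and lambda(1) = chi(1), so |G : U| = 1. *)
have := congr1 (fun phi : 'CF(G) => phi 1%g) IndE.
rewrite m1 /= cfInd1 // eq_ij -chiUE cfRes1 -{2}['chi_c 1%g]mul1r.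
by move/(mulIf (irr1_neq0 c))/eqP; rewrite pnatr_eq1 indexg_eq1.
Qed.

Theorem lemma2p3 (gT : finGroupType) (G N : {group gT})
  (theta : 'CF(N)) (chi : 'CF(G)) :
  (N <| G)%g ->
  theta \in irr N -> ~~ (theta \is a linear_char) ->
  chi \in irr G -> 'Res[N] chi = theta ->
  mi_char chi -> mi_char theta.
Proof.
move=> nsNG theta_irr theta_nonlin chi_irr chiN [_ _ [U [lam [m []]]]].
move=> ltUG lam_irr m_gt0 IndE; split=> //.
have [sNG nNG] := andP nsNG; have sUG := proper_sub ltUG.
have not_sNU : ~~ (N \subset U).
  apply: contraL ltUG => sNU; rewrite properE negb_and negbK orbC.
  by rewrite (Ind_mult_over_irr_Res sNU sUG chi_irr _ lam_irr m_gt0 IndE) ?chiN.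
pose V := (U :&: N)%G.
have ltVN : V \proper N by rewrite properE subsetIr subsetI subxx andbT.
have [t thetaE] := irrP theta_irr; have [i lamE] := irrP lam_irr.
have [j ij] := constt_cfRes_irr V i.
(* Every irreducible constituent of ('chi_j)^N lies under (lambda^G)_N,
   which is m theta. *)
have only_t : {in irr_constt ('Ind[N] 'chi_j), forall k, k = t}.
  move=> k /(constt_Res_Ind_meet (G := G) (subset_trans sUG nNG) _ ij).
  rewrite join_subG sNG sUG -lamE IndE raddfMn /= chiN thetaE => /(_ isT).
  rewrite irr_consttE cfdotMnl mulrn_eq0 negb_or -irr_consttE constt_irr.
  by case/andP=> _ /eqP.
have Ind_j := cfun_single_constt only_t.
set d := '['Ind[N] 'chi_j, 'chi_t] in Ind_j.
have d_nat : d \in Num.nat by rewrite Cnat_cfdot_char_irr ?cfInd_char ?irr_char.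
have d_neq0 : d != 0.
  apply: contraNneq (Ind_irr_neq0 j (proper_sub ltVN)) => d0.
  by rewrite Ind_j d0 scale0r.
exists V, 'chi_j, (Num.trunc d); split; rewrite ?mem_irr //.
  by rewrite lt0n -(eqr_nat algC) truncnK.
by rewrite Ind_j thetaE -{1}(truncnK d_nat) scaler_nat.
Qed.
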